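(* Let $H(s)=K\,\frac{\prod_{i=1}^{m}(s-z_i)}{\prod_{i=1}^{n}(s-p_i)}$ be a rational function with real coefficients, where $K\neq 0$ is real, $z\in\mathbb{C}^m$ are its zeros and $p\in\mathbb{C}^n$ its poles. If $H$ is logarithmically completely monotonic, then: (a) $n\geq m$; (b) $\max_i \operatorname{Re}(p_i)\geq \max_i \operatorname{Re}(z_i)$; (c) if $n=m$, then $\sum_{i=1}^n p_i\geq \sum_{i=1}^m z_i$.
   Context: Let $\sigma(H)=\max_i \operatorname{Re}(p_i)$. A function $H$ is logarithmically completely monotonic (LCM) on $I\subseteq\mathbb{R}$ if $H(s)>0$ and $(-1)^k[\log H(s)]^{(k)}\geq 0$ for all $k\in\{1,2,\dots\}$ and all $s\in I$. ''$H$ is LCM'' means LCM on $I=(\sigma(H),+\infty)$. *)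

From HB Require Import structures.
From mathcomp Require Import all_boot all_order all_algebra.
From mathcomp Require Import all_classical all_reals all_analysis.
From mathcomp Require Import complex.
Set Implicit Arguments. Unset Strict Implicit. Unset Printing Implicit Defensive.
Import Order.TTheory GRing.Theory Num.Theory.
Local Open Scope ring_scope.
Local Open Scope complex_scope.

Definition root_poly (R : realType) (k : nat) (r : 'I_k -> R[i]) : {poly R[i]} :=
  \prod_(i < k) ('X - (r i)%:P).

Definition real_coef_poly (R : realType) (q : {poly R[i]}) : Prop :=
  forall j : nat, complex.Im (q`_j) = 0.

Definition ratH (R : realType) (m n : nat) (K : R) (z : 'I_m -> R[i])
  (p : 'I_n -> R[i]) (s : R[i]) : R[i] :=
  K%:C * (\prod_(i < m) (s - z i)) / (\prod_(i < n) (s - p i)).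

(* Restriction of H to real arguments (real part; H is real there when
   the coefficients are real). *)
Definition ratH_real (R : realType) (m n : nat) (K : R) (z : 'I_m -> R[i])
  (p : 'I_n -> R[i]) (s : R) : R :=
  complex.Re (ratH K z p s%:C).

(* max_i Re(r_i) in the extended reals (-oo for an empty family). *)
Definition max_re (R : realType) (k : nat) (r : 'I_k -> R[i]) : \bar R :=
  \big[Order.max/-oo%E]_(i < k) (complex.Re (r i))%:E.

Definition sigmaH (R : realType) (n : nat) (p : 'I_n -> R[i]) : \bar R :=
  max_re p.

Definition LCM_on (R : realType) (f : R -> R) (I : set R) : Prop :=
  forall s, I s ->
    0 < f s /\
    forall k : nat, (0 < k)%N ->
      0 <= (-1) ^+ k * derive1n k (fun x => ln (f x)) s.

Definition LCM_H (R : realType) (m n : nat) (K : R) (z : 'I_m -> R[i])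
  (p : 'I_n -> R[i]) : Prop :=
  LCM_on (ratH_real K z p) [set s : R | (sigmaH p < s%:E)%E].

From HB Require Import structures.
From mathcomp Require Import all_boot all_order all_algebra.
From mathcomp Require Import all_classical all_reals all_analysis.
From mathcomp Require Import complex.
From mathcomp Require Import ring lra.
Set Implicit Arguments. Unset Strict Implicit. Unset Printing Implicit Defensive.
Import Order.TTheory GRing.Theory Num.Theory.
Import numFieldNormedType.Exports.
Local Open Scope ring_scope.
Local Open Scope complex_scope.
Local Open Scope classical_set_scope.

(** For real s > sigma(H), positivity of H gives
    ln H(s) = ln |K| + sum_i ln |s - z_i| - sum_j ln |s - p_j|, whose k-th derivative is
    (-1)^(k-1) (k-1)! (S_k(z) - S_k(p)) with S_k(r) = sum_i Re (s - r_i)^(-k). Thus H is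
    LCM only if S_k(z) <= S_k(p) for every k >= 1 and s > sigma(H).
    (a), (c): as s -> +oo, s S_1(r) -> #r, and s^2 S_1(r) - #r s -> sum_i Re r_i.
    (b): if a zero had real part > sigma(H), pick a zero a of maximal real part and, among
    those, of minimal |Im a|. For large s, a and its conjugate are strictly closer to s
    than every other zero or pole, so after multiplying S_2k by |s - a|^(2k) all other
    terms vanish geometrically in k, while a and its conjugate contribute a positive
    multiple of Re v^k with |v| = 1. This is impossible, since Re v^j >= 1/8 for some
    j <= 4. *)

(* Otherwise [Re] and [Im] would resolve to [Num.Re] and [Num.Im]. *)
Local Notation Re := complex.Re.
Local Notation Im := complex.Im.

Section ComplexReIm.
Variable R : realType.
Implicit Types x y : R[i].

Definition sqnormc x : R := Re x ^+ 2 + Im x ^+ 2.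

Lemma Re_add x y : Re (x + y) = Re x + Re y.
Proof. by case: x => a b; case: y. Qed.

Lemma Im_add x y : Im (x + y) = Im x + Im y.
Proof. by case: x => a b; case: y. Qed.

Lemma Re_sum (I : Type) (r : seq I) (P : pred I) (F : I -> R[i]) :
  Re (\sum_(i <- r | P i) F i) = \sum_(i <- r | P i) Re (F i).
Proof. by elim/big_rec2: _ => // i a b _ <-; rewrite Re_add. Qed.

Lemma Im_sum (I : Type) (r : seq I) (P : pred I) (F : I -> R[i]) :
  Im (\sum_(i <- r | P i) F i) = \sum_(i <- r | P i) Im (F i).
Proof. by elim/big_rec2: _ => // i a b _ <-; rewrite Im_add. Qed.

Lemma Re_opp x : Re (- x) = - Re x.
Proof. by case: x. Qed.

Lemma Im_opp x : Im (- x) = - Im x.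
Proof. by case: x. Qed.

Lemma Re_mul x y : Re (x * y) = Re x * Re y - Im x * Im y.
Proof. by case: x => a b; case: y. Qed.

Lemma Im_mul x y : Im (x * y) = Re x * Im y + Im x * Re y.
Proof. by case: x => a b; case: y. Qed.

Lemma Re_inv x : Re x^-1 = Re x / sqnormc x.
Proof. by case: x. Qed.

Lemma Im_inv x : Im x^-1 = - Im x / sqnormc x.
Proof. by case: x => a b; rewrite /sqnormc /= mulNr. Qed.

Lemma Re_scalec (r : R) x : Re (r%:C * x) = r * Re x.
Proof. by rewrite Re_mul /= mul0r subr0. Qed.

Lemma Re_conjcX x k : Re (x^* ^+ k) = Re (x ^+ k).
Proof. by rewrite -rmorphXn; case: (x ^+ k). Qed.

Lemma sqnormc_ge0 x : 0 <= sqnormc x.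
Proof. by rewrite addr_ge0 ?sqr_ge0. Qed.

Lemma sqnormc_eq0 x : (sqnormc x == 0) = (x == 0).
Proof.
rewrite paddr_eq0 ?sqr_ge0 // !sqrf_eq0.
by case: x => a b; rewrite eq_complex.
Qed.

Lemma sqnormc_gt0 x : (0 < sqnormc x) = (x != 0).
Proof. by rewrite lt_def sqnormc_eq0 sqnormc_ge0 andbT. Qed.

Lemma sqnormcM x y : sqnormc (x * y) = sqnormc x * sqnormc y.
Proof. by rewrite /sqnormc Re_mul Im_mul; ring. Qed.

Lemma sqnormcX x k : sqnormc (x ^+ k) = sqnormc x ^+ k.
Proof.
elim: k => [|k IH]; first by rewrite /sqnormc /= expr0n /= addr0 expr1n.
by rewrite !exprS sqnormcM IH.
Qed.

Lemma sqnormcV x : sqnormc x^-1 = (sqnormc x)^-1.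
Proof.
have [->|x0] := eqVneq x 0; first by rewrite invr0 /sqnormc /= expr0n /= addr0 invr0.
apply: (mulfI (x := sqnormc x)); first by rewrite sqnormc_eq0.
by rewrite -sqnormcM divff ?mulfV ?sqnormc_eq0 // /sqnormc /= expr0n /= addr0 expr1n.
Qed.

Lemma sqnormc_prod (I : Type) (r : seq I) (P : pred I) (F : I -> R[i]) :
  sqnormc (\prod_(i <- r | P i) F i) = \prod_(i <- r | P i) sqnormc (F i).
Proof.
elim/big_rec2: _ => [|i a b _ <-]; last by rewrite sqnormcM.
by rewrite /sqnormc /= expr0n /= addr0 expr1n.
Qed.

Lemma sqnormc_real x : Im x = 0 -> sqnormc x = Re x ^+ 2.
Proof. by rewrite /sqnormc => ->; rewrite expr0n /= addr0. Qed.

Lemma Re_sqr_le_sqnormc x : Re x ^+ 2 <= sqnormc x.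
Proof. by rewrite lerDl sqr_ge0. Qed.

End ComplexReIm.

Section ComplexDerivative.
Variable R : realType.
Implicit Types (f g : R -> R[i]) (x s : R) (a : R[i]).

Definition is_derivec f x (df : R[i]) : Prop :=
  is_derive x 1 (fun t => Re (f t)) (Re df) /\
  is_derive x 1 (fun t => Im (f t)) (Im df).

Lemma is_derivec_cst (c : R[i]) x : is_derivec (fun=> c) x 0.
Proof. by split; exact: is_derive_cst. Qed.

Lemma is_derivecM f g x df dg : is_derivec f x df -> is_derivec g x dg ->
  is_derivec (fun t => f t * g t) x (df * g x + f x * dg).
Proof.
move=> [fr fi] [gr gi]; split.
- rewrite (_ : (fun t => _) = (fun t => Re (f t) * Re (g t) - Im (f t) * Im (g t))).
    apply: is_derive_eq (is_deriveB (is_deriveM fr gr) (is_deriveM fi gi)) _.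
    by rewrite /GRing.scale /= Re_add !Re_mul; ring.
  by apply/funext => t; rewrite Re_mul.
- rewrite (_ : (fun t => _) = (fun t => Re (f t) * Im (g t) + Im (f t) * Re (g t))).
    apply: is_derive_eq (is_deriveD (is_deriveM fr gi) (is_deriveM fi gr)) _.
    by rewrite /GRing.scale /= Im_add !Im_mul; ring.
  by apply/funext => t; rewrite Im_mul.
Qed.

Lemma is_derivecX f x df k : is_derivec f x df ->
  is_derivec (fun t => f t ^+ k) x (f x ^+ k.-1 * df *+ k).
Proof.
move=> hf; elim: k => [|k IH].
  rewrite mulr0n (_ : (fun t => _) = fun=> 1); first exact: is_derivec_cst.
  by apply/funext => t; rewrite expr0.
rewrite (_ : (fun t => _) = fun t => f t * f t ^+ k); last first.
  by apply/funext => t; rewrite exprS.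
suff -> : f x ^+ k * df *+ k.+1 = df * f x ^+ k + f x * (f x ^+ k.-1 * df *+ k).
  exact: is_derivecM.
case: k {IH} => [|k]; first by rewrite mulr0n mulr0 addr0 expr0 mulr1 mul1r.
by rewrite mulrnAr mulrA -exprS mulrS mulrC.
Qed.

Lemma is_derive_div (u v : R -> R) x du dv : v x != 0 ->
  is_derive x 1 u du -> is_derive x 1 v dv ->
  is_derive x 1 (fun y => u y / v y) ((du * v x - u x * dv) / v x ^+ 2).
Proof.
move=> vx0 hu hv; apply: is_derive_eq (is_deriveM hu (is_deriveV vx0 hv)) _.
by rewrite /GRing.scale /=; field.
Qed.

Definition resolvent (a : R[i]) (s : R) : R[i] := (s%:C - a)^-1.

Lemma sqnormc_subC a s : sqnormc (s%:C - a) = (s - Re a) ^+ 2 + Im a ^+ 2.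
Proof. by case: a => u v; rewrite /sqnormc /= add0r sqrrN. Qed.

Lemma Re_resolvent a s : Re (resolvent a s) = (s - Re a) / sqnormc (s%:C - a).
Proof. by rewrite Re_inv; case: a. Qed.

Lemma Im_resolvent a s : Im (resolvent a s) = Im a / sqnormc (s%:C - a).
Proof. by rewrite Im_inv; case: a => u v; rewrite /= add0r opprK. Qed.

Lemma is_derive_sqnormc_subC a s :
  is_derive s 1 (fun t => sqnormc (t%:C - a)) (2 * (s - Re a)).
Proof.
under [fun t => _]funext do rewrite sqnormc_subC.
have hlin : is_derive s 1 (fun t : R => t - Re a) 1 by exact: is_derive_shift.
apply: is_derive_eq (is_deriveD (is_deriveX 2 hlin) (is_derive_cst (Im a ^+ 2) s 1)) _.
by rewrite /GRing.scale /=; ring.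
Qed.

Lemma is_derivec_resolvent a s : s%:C != a ->
  is_derivec (resolvent a) s (- resolvent a s ^+ 2).
Proof.
rewrite -subr_eq0 -sqnormc_eq0 => D0.
have hlin : is_derive s 1 (fun t : R => t - Re a) 1 by exact: is_derive_shift.
split.
- rewrite (_ : (fun t => _) = fun t => (t - Re a) / sqnormc (t%:C - a)); last first.
    by apply/funext => t; rewrite Re_resolvent.
  apply: is_derive_eq (is_derive_div (v := fun t => sqnormc (t%:C - a)) D0 hlin
    (is_derive_sqnormc_subC a s)) _.
  rewrite Re_opp expr2 Re_mul !Re_resolvent !Im_resolvent /= sqnormc_subC.
  by move: D0; rewrite sqnormc_subC => D0; field.
- rewrite (_ : (fun t => _) = fun t => Im a / sqnormc (t%:C - a)); last first.
    by apply/funext => t; rewrite Im_resolvent.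
  apply: is_derive_eq (is_derive_div (v := fun t => sqnormc (t%:C - a)) D0
    (is_derive_cst (Im a) s 1) (is_derive_sqnormc_subC a s)) _.
  rewrite Im_opp expr2 Im_mul !Re_resolvent !Im_resolvent /= sqnormc_subC.
  by move: D0; rewrite sqnormc_subC => D0; field.
Qed.

End ComplexDerivative.

Section PowerSums.
Variable R : realType.
Implicit Types (s : R) (a : R[i]).

Lemma is_derive_Re_resolventX a s k : s%:C != a ->
  is_derive s 1 (fun t => Re (resolvent a t ^+ k)) (- Re (resolvent a s ^+ k.+1) *+ k).
Proof.
move=> sa; have [h _] := is_derivecX k (is_derivec_resolvent sa).
apply: is_derive_eq h _; case: k => [|k]; first by rewrite !mulr0n.
by rewrite mulrN -exprD addn2 /= !mulNrn Re_opp raddfMn.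
Qed.

Definition log_dist a s : R := 2^-1 * ln (sqnormc (s%:C - a)).

Lemma is_derive_log_dist a s : s%:C != a ->
  is_derive s 1 (log_dist a) (Re (resolvent a s)).
Proof.
rewrite -subr_eq0 -sqnormc_gt0 => D0.
have h := is_deriveZ (2^-1) (is_derive1_comp (g := fun t => sqnormc (t%:C - a))
  (is_derive1_ln D0) (is_derive_sqnormc_subC a s)).
apply: is_derive_eq h _.
by rewrite Re_resolvent /GRing.scale /=; field; rewrite gt_eqF.
Qed.

Definition power_sum n (r : 'I_n -> R[i]) (k : nat) s : R :=
  \sum_(i < n) Re (resolvent (r i) s ^+ k).

Lemma is_derive_power_sum n (r : 'I_n -> R[i]) k s : (forall i, s%:C != r i) ->
  is_derive s 1 (power_sum r k) (- power_sum r k.+1 s *+ k).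
Proof.
move=> sr; have := is_derive_sum (fun i => is_derive_Re_resolventX k (sr i)).
by rewrite fct_sumE sumrMnl sumrN.
Qed.

Lemma is_derive_sum_log_dist n (r : 'I_n -> R[i]) s : (forall i, s%:C != r i) ->
  is_derive s 1 (fun t => \sum_(i < n) log_dist (r i) t) (power_sum r 1 s).
Proof.
move=> sr; have := is_derive_sum (fun i => is_derive_log_dist (sr i)).
by rewrite fct_sumE.
Qed.

End PowerSums.

Section RealFunctions.
Variable R : realType.

Lemma derive1n_is_derive_chain (V : set R) (G : R -> R) (F : nat -> R -> R) :
  (forall x, V x -> \forall y \near x, V y) ->
  (forall x, V x -> G x = F 0%N x) ->
  (forall k x, V x -> is_derive x 1 (F k) (F k.+1 x)) ->
  forall k x, V x -> derive1n k G x = F k x.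
Proof.
move=> Vo G0 dF; elim=> [|k IH] x Vx; first by rewrite derive1n0 G0.
rewrite derive1nS derive1E (@near_eq_derive _ _ _ _ (F k)).
  by have [_ ->] := dF k x Vx.
by near=> y; apply: IH; near: y; exact: Vo.
Unshelve. all: end_near.
Qed.

Lemma near_ereal_lt (e : \bar R) (x : R) : (e < x%:E)%E ->
  \forall y \near x, (e < y%:E)%E.
Proof.
case: e => [r | // | _]; last by near=> y; exact: ltNyr.
by rewrite lte_fin => rx; apply: filterS (lt_nbhsr rx) => y; rewrite /= lte_fin.
Unshelve. all: end_near.
Qed.

Lemma ln_prod (I : finType) (F : I -> R) : (forall i, 0 < F i) ->
  ln (\prod_i F i) = \sum_i ln (F i).
Proof.
move=> F0; suff [] : 0 < \prod_i F i /\ ln (\prod_i F i) = \sum_i ln (F i) by [].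
apply: (big_rec2 (fun s q => 0 < q /\ ln q = s)) => [|i s q _ [q0 <-]].
  by rewrite ln1.
by rewrite mulr_gt0 // lnM // posrE.
Qed.

End RealFunctions.

Section RealPolynomial.
Variable R : realType.
Implicit Types x y : R[i].

Lemma Im_horner_real (q : {poly R[i]}) (s : R) :
  real_coef_poly q -> Im q.[s%:C] = 0.
Proof.
move=> hq; rewrite horner_coef Im_sum big1 // => i _.
by rewrite Im_mul hq -rmorphXn /= mulr0 mul0r addr0.
Qed.

Lemma Im_prod_real n (r : 'I_n -> R[i]) (s : R) :
  real_coef_poly (root_poly r) -> Im (\prod_(i < n) (s%:C - r i)) = 0.
Proof.
move=> /(Im_horner_real s); rewrite /root_poly horner_prod.
by under eq_bigr do rewrite hornerXsubC.
Qed.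

Lemma Im_sum_real n (r : 'I_n -> R[i]) :
  real_coef_poly (root_poly r) -> Im (\sum_(i < n) r i) = 0.
Proof.
case: n r => [|n] r hr; first by rewrite big_ord0.
have := hr n; rewrite /root_poly -(big_map r xpredT (fun x => 'X - x%:P)).
have := @coefPn_prod_XsubC _ (map r (index_enum 'I_n.+1)).
rewrite size_map /index_enum -enumT size_enum_ord /= => -> //.
by rewrite big_map Im_opp => /eqP; rewrite oppr_eq0 Im_sum => /eqP.
Qed.

End RealPolynomial.

Section LogDerivatives.
Variables (R : realType) (m n : nat) (K : R).
Variables (z : 'I_m -> R[i]) (p : 'I_n -> R[i]).
Hypothesis z_real : real_coef_poly (root_poly z).
Hypothesis p_real : real_coef_poly (root_poly p).

Lemma Im_ratH (s : R) : Im (ratH K z p s%:C) = 0.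
Proof.
rewrite /ratH Im_mul Im_inv Im_prod_real // Im_mul Im_prod_real //= Re_mul /=.
by rewrite !(mulr0, mul0r, oppr0, addr0).
Qed.

Lemma sqr_ratH_real (s : R) : ratH_real K z p s ^+ 2 =
  K ^+ 2 * \prod_(i < m) sqnormc (s%:C - z i) / \prod_(j < n) sqnormc (s%:C - p j).
Proof.
rewrite /ratH_real -sqnormc_real ?Im_ratH // /ratH !sqnormcM sqnormcV !sqnormc_prod.
by rewrite /sqnormc /= expr0n /= addr0.
Qed.

Lemma ln_ratH_real (s : R) : 0 < ratH_real K z p s ->
  [/\ forall i, s%:C != z i, forall j, s%:C != p j &
      ln (ratH_real K z p s) =
      2^-1 * ln (K ^+ 2) + \sum_(i < m) log_dist (z i) s - \sum_(j < n) log_dist (p j) s].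
Proof.
move=> f0; have := sqr_ratH_real s; set Pz := \prod_(i < m) _; set Pp := \prod_(j < n) _.
move=> sqrf; have f2 : 0 < K ^+ 2 * Pz / Pp by rewrite -sqrf exprn_gt0.
have factors_gt0 k (r : 'I_k -> R[i]) : \prod_(i < k) sqnormc (s%:C - r i) != 0 ->
    forall i, 0 < sqnormc (s%:C - r i).
  by move=> /prodf_neq0 r0 i; rewrite lt_def r0 ?sqnormc_ge0.
have z_gt0 : forall i, 0 < sqnormc (s%:C - z i).
  by apply: factors_gt0; rewrite -/Pz; apply: contraTneq f2 => ->; rewrite mulr0 mul0r ltxx.
have p_gt0 : forall j, 0 < sqnormc (s%:C - p j).
  by apply: factors_gt0; rewrite -/Pp; apply: contraTneq f2 => ->; rewrite invr0 mulr0 ltxx.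
have K2_gt0 : 0 < K ^+ 2.
  by rewrite lt_def sqr_ge0 andbT; apply: contraTneq f2 => ->; rewrite !mul0r ltxx.
split=> [i | j |]; [by rewrite -subr_eq0 -sqnormc_gt0 | by rewrite -subr_eq0 -sqnormc_gt0 |].
have Pz_gt0 : 0 < Pz by apply: prodr_gt0 => i _.
have Pp_gt0 : 0 < Pp by apply: prodr_gt0 => j _.
have -> : ln (ratH_real K z p s) = 2^-1 * ln (ratH_real K z p s ^+ 2).
  by rewrite lnXn // mulr2n; field.
have KPz_gt0 : 0 < K ^+ 2 * Pz by exact: mulr_gt0.
rewrite sqrf ln_div ?posrE // lnM ?posrE // !ln_prod //.
by rewrite /log_dist -!mulr_sumr; ring.
Qed.

Definition logH_derivative (k : nat) (s : R) : R :=
  if k is k'.+1 then (-1) ^+ k' * k'`!%:R * (power_sum z k s - power_sum p k s)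
  else 2^-1 * ln (K ^+ 2) + \sum_(i < m) log_dist (z i) s - \sum_(j < n) log_dist (p j) s.

Lemma is_derive_logH_derivative k s :
  (forall i, s%:C != z i) -> (forall j, s%:C != p j) ->
  is_derive s 1 (logH_derivative k) (logH_derivative k.+1 s).
Proof.
move=> sz sp; case: k => [|k].
  apply: is_derive_eq (is_deriveB (is_deriveD (is_derive_cst (2^-1 * ln (K ^+ 2)) s 1)
    (is_derive_sum_log_dist sz)) (is_derive_sum_log_dist sp)) _.
  by rewrite add0r /logH_derivative expr0 !mul1r.
apply: is_derive_eq (is_deriveZ ((-1) ^+ k * k`!%:R)
  (is_deriveB (is_derive_power_sum k.+1 sz) (is_derive_power_sum k.+1 sp))) _.
rewrite /logH_derivative /GRing.scale /= -mulrnBl -mulr_natr factS natrM exprS.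
by ring.
Qed.

Lemma LCM_H_power_sum_le s k : LCM_H K z p -> (sigmaH p < s%:E)%E -> (0 < k)%N ->
  power_sum z k s <= power_sum p k s.
Proof.
move=> lcm Vs; case: k => // k _.
pose V x := (sigmaH p < x%:E)%E.
have logH x : V x -> _ := fun Vx => ln_ratH_real (lcm x Vx).1.
have dk := derive1n_is_derive_chain (G := fun x => ln (ratH_real K z p x))
  (@near_ereal_lt _ _) (fun x Vx => let: And3 _ _ e := logH x Vx in e)
  (fun k x Vx => let: And3 a b _ := logH x Vx in is_derive_logH_derivative k a b).
have := (lcm s Vs).2 k.+1 isT; rewrite dk //= exprS mulN1r mulNr !mulrA.
rewrite -exprMn mulrNN mulr1 expr1n mul1r oppr_ge0 pmulr_rle0 ?ltr0n ?fact_gt0 //.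
by rewrite subr_le0.
Qed.

End LogDerivatives.

Section Asymptotics.
Variable R : realType.
Implicit Types (a c : R[i]) (s : R).

Lemma resolvent_expand a s : s%:C != a ->
  s%:C * resolvent a s = 1 + a * resolvent a s.
Proof.
by move=> sa; rewrite /resolvent -[X in X * _](subrK a) mulrDl divff // subr_eq0.
Qed.

Lemma near_pinfty_neq a : \forall s \near +oo, s%:C != a.
Proof.
near=> s; apply/negP => /eqP sa.
suff : Re a < s by rewrite -sa ltxx.
by near: s; exact: nbhs_pinfty_gt (num_real _).
Unshelve. all: end_near.
Qed.

Lemma cvg_Re_mul_resolvent c a : Re (c * resolvent a s) @[s --> +oo] --> 0.
Proof.
apply/cvgr0Pnorm_lt => e e0; near=> s.
set t := s - Re a; set N := sqnormc c.
have t1 : 1 < t by rewrite ltrBrDl; near: s; exact: nbhs_pinfty_gt (num_real _).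
have tN : N < e ^+ 2 * t.
  rewrite -ltr_pdivrMl ?exprn_gt0 // ltrBrDl.
  by near: s; exact: nbhs_pinfty_gt (num_real _).
have t0 : 0 < t by apply: lt_trans t1.
have D_ge : t ^+ 2 <= sqnormc (s%:C - a) by rewrite sqnormc_subC lerDl sqr_ge0.
have bound : Re (c * resolvent a s) ^+ 2 <= N / t ^+ 2.
  apply: le_trans (Re_sqr_le_sqnormc _) _.
  rewrite sqnormcM sqnormcV ler_wpM2l ?sqnormc_ge0 // lef_pV2 ?posrE ?exprn_gt0 //.
  exact: lt_le_trans (exprn_gt0 2 t0) D_ge.
rewrite -(@ltr_pXn2r _ 2) ?nnegrE ?(ltW e0) // real_normK ?num_real //.
apply: le_lt_trans bound _; rewrite ltr_pdivrMr ?exprn_gt0 //.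
apply: lt_le_trans tN _; rewrite ler_wpM2l ?sqr_ge0 // expr2.
by rewrite ler_peMl ?ltW.
Unshelve. all: end_near.
Qed.

Lemma cvg_mul_Re_resolvent a : s * Re (resolvent a s) @[s --> +oo] --> (1 : R).
Proof.
have E : \forall s \near +oo, 1 + Re (a * resolvent a s) = s * Re (resolvent a s).
  near=> s; rewrite -Re_scalec resolvent_expand ?Re_add //.
  by near: s; exact: near_pinfty_neq.
apply: cvg_trans (near_eq_cvg E) _.
by rewrite -[X in _ `=>` nbhs X]addr0; apply: cvgD; [exact: cvg_cst | exact: cvg_Re_mul_resolvent].
Unshelve. all: end_near.
Qed.

Lemma cvg_sqr_mul_Re_resolvent a :
  s ^+ 2 * Re (resolvent a s) - s @[s --> +oo] --> Re a.
Proof.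
have E : \forall s \near +oo,
    Re a + Re (a ^+ 2 * resolvent a s) = s ^+ 2 * Re (resolvent a s) - s.
  near=> s; have sa : s%:C != a by near: s; exact: near_pinfty_neq.
  have h1 : s * Re (resolvent a s) = 1 + Re (a * resolvent a s).
    by rewrite -Re_scalec resolvent_expand // Re_add.
  have h2 : s * Re (a * resolvent a s) = Re a + Re (a ^+ 2 * resolvent a s).
    by rewrite -Re_scalec mulrCA resolvent_expand // mulrDr mulr1 Re_add mulrA.
  by rewrite [s ^+ 2]expr2 -mulrA h1 mulrDr mulr1 h2 addrAC subrr add0r.
apply: cvg_trans (near_eq_cvg E) _.
by rewrite -[X in _ `=>` nbhs X]addr0; apply: cvgD; [exact: cvg_cst | exact: cvg_Re_mul_resolvent].
Unshelve. all: end_near.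
Qed.

End Asymptotics.

Lemma cvg_sum {K : numFieldType} {V : normedModType K} (T : Type) (F : set_system T)
    {FF : Filter F} (I : finType) (P : pred I) (f : I -> T -> V) (l : I -> V) :
  (forall i, P i -> f i x @[x --> F] --> l i) ->
  \sum_(i | P i) f i x @[x --> F] --> \sum_(i | P i) l i.
Proof. by move=> fl; apply: cvg_big => //; exact: add_continuous. Qed.

Lemma near_sigmaH_lt (R : realType) n (p : 'I_n -> R[i]) :
  \forall s \near +oo, (sigmaH p < s%:E)%E.
Proof.
apply: filterS (filter_forall _ (fun j => nbhs_pinfty_gt (num_real (Re (p j))))) => s ps.
by apply: bigmax_lt => [|j _]; [exact: ltNyr | rewrite lte_fin].
Qed.

Section DominatedPowerSums.
Variable R : realType.
Implicit Types v w : R[i].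

(* Re v^j = T_j (Re v) for the Chebyshev polynomials T_j. *)
Lemma exists_Re_pow_ge v : sqnormc v = 1 ->
  exists2 j, (0 < j <= 4)%N & 8^-1 <= Re (v ^+ j).
Proof.
rewrite /sqnormc => v1; set c := Re v.
have s2 : Im v ^+ 2 = 1 - c ^+ 2 by rewrite -v1 addrC addKr.
have e2 : Re (v ^+ 2) = 2 * c ^+ 2 - 1.
  by rewrite expr2 Re_mul -!expr2 s2 -/c; ring.
have i2 : Im (v ^+ 2) = 2 * c * Im v by rewrite expr2 Im_mul -/c; ring.
have e3 : Re (v ^+ 3) = c * (4 * c ^+ 2 - 3).
  rewrite exprS Re_mul e2 i2 -/c.
  transitivity (c * (2 * c ^+ 2 - 1) - 2 * c * Im v ^+ 2); first by ring.
  by rewrite s2; ring.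
have e4 : Re (v ^+ 4) = 2 * (2 * c ^+ 2 - 1) ^+ 2 - 1.
  rewrite (exprM v 2 2) expr2 Re_mul e2 i2.
  transitivity ((2 * c ^+ 2 - 1) ^+ 2 - 4 * c ^+ 2 * Im v ^+ 2); first by ring.
  by rewrite s2; ring.
have [c1|c1] := lerP 8^-1 c; first by exists 1%N; rewrite ?expr1.
have [c2|c2] := lerP (9/16) (c ^+ 2); first by exists 2%N; rewrite // e2; nra.
have [c3|c3] := lerP (c ^+ 2) (1/9); first by exists 4%N; rewrite // e4; nra.
exists 3%N => //; rewrite e3.
have : c < - (1/3) by nra.
nra.
Qed.

Lemma Re_pow_not_le_vanishing v (e : nat -> R) : sqnormc v = 1 ->
  e n @[n --> \oo] --> 0 -> ~ (forall j, (0 < j)%N -> Re (v ^+ j) <= e j).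
Proof.
have e8 : (0 : R) < 8^-1 by rewrite invr_gt0.
move=> v1 /cvgr_lt /(_ _ e8)[N _ eN] ve.
have vN1 : sqnormc (v ^+ N.+1) = 1 by rewrite sqnormcX v1 expr1n.
have [t /andP[t0 _]] := exists_Re_pow_ge vN1; rewrite -exprM => vt.
have Nt : (N <= N.+1 * t)%N by rewrite (leq_trans (leqnSn N)) // leq_pmulr.
have k0 : (0 < N.+1 * t)%N by rewrite muln_gt0 t0.
by have := lt_le_trans (le_lt_trans (ve _ k0) (eN _ Nt)) vt; rewrite ltxx.
Qed.

Lemma Re_pow_le_sqnormc w j : `|Re (w ^+ (2 * j))| <= sqnormc w ^+ j.
Proof.
rewrite -(@ler_pXn2r _ 2) ?nnegrE ?exprn_ge0 ?sqnormc_ge0 //.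
rewrite real_normK ?num_real // -exprM mulnC -sqnormcX.
exact: Re_sqr_le_sqnormc.
Qed.

Lemma Re_pow_scaled_le (r : R) w k : 0 < r ->
  `|r^-1 ^+ k * Re (w ^+ (2 * k))| <= (sqnormc w / r) ^+ k.
Proof.
move=> r0; have rk : 0 < r^-1 ^+ k by rewrite exprn_gt0 ?invr_gt0.
rewrite normrM (ger0_norm (ltW rk)) exprMn mulrC.
by apply: ler_wpM2r; [exact: ltW | exact: Re_pow_le_sqnormc].
Qed.

Lemma power_sums_not_dominated (I J : finType) (x : I -> R[i]) (y : J -> R[i]) w i0 :
  w != 0 -> x i0 = w ->
  (forall i, [\/ x i = w, x i = w^* | sqnormc (x i) < sqnormc w]) ->
  (forall j, sqnormc (y j) < sqnormc w) ->
  ~ (forall k, (0 < k)%N -> \sum_i Re (x i ^+ k) <= \sum_j Re (y j ^+ k)).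
Proof.
move=> w0 xi0 hx hy hle; set r := sqnormc w.
have r0 : 0 < r by rewrite sqnormc_gt0.
pose good i := (x i == w) || (x i == w^*).
pose mu : R := #|[pred i | good i]|%:R.
pose ratio u := sqnormc u / r.
have ratio_lt1 u : sqnormc u < r -> `|ratio u| < 1.
  by move=> ur; rewrite ger0_norm ?divr_ge0 ?sqnormc_ge0 ?ltW // ltr_pdivrMr ?mul1r.
pose e k := \sum_(i | ~~ good i) ratio (x i) ^+ k + \sum_j ratio (y j) ^+ k.
have e_ge0 k : 0 <= e k.
  by rewrite addr_ge0 // sumr_ge0 // => i _; rewrite exprn_ge0 // divr_ge0 ?sqnormc_ge0 ?ltW.
(* [w^2 / r] has modulus 1, and [e k] bounds the non-dominant terms of the
   [2k]-th power sums once they are divided by [r^k]. *)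
apply: (@Re_pow_not_le_vanishing ((r^-1)%:C * w ^+ 2) e).
- rewrite sqnormcM sqnormcX /sqnormc /= expr0n /= addr0 -exprMn mulVf ?expr1n //.
  by rewrite gt_eqF.
- have bad_lt i : ~~ good i -> sqnormc (x i) < r.
    by case: (hx i) => [xi | xi | //]; rewrite /good xi eqxx ?orbT.
  have := cvgD (cvg_sum (fun i bad => cvg_expr (ratio_lt1 _ (bad_lt i bad))))
    (cvg_sum (P := xpredT) (fun j _ => cvg_expr (ratio_lt1 _ (hy j)))).
  by rewrite !big1_eq addr0; apply.
move=> k k0; have := hle (2 * k)%N; rewrite muln_gt0 k0 => /(_ isT).
rewrite (bigID good) /=.
have -> : \sum_(i | good i) Re (x i ^+ (2 * k)) = mu * Re (w ^+ (2 * k)).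
  rewrite (eq_bigr (fun=> Re (w ^+ (2 * k)))) => [|i /orP[] /eqP ->]; last exact: Re_conjcX.
    by rewrite sumr_const mulr_natl.
  by [].
have rk : 0 < r^-1 ^+ k by rewrite exprn_gt0 ?invr_gt0.
have Rev : Re (((r^-1)%:C * w ^+ 2) ^+ k) = r^-1 ^+ k * Re (w ^+ (2 * k)).
  by rewrite exprMn -rmorphXn Re_scalec exprM.
have Sbad : - \sum_(i | ~~ good i) ratio (x i) ^+ k <=
    r^-1 ^+ k * \sum_(i | ~~ good i) Re (x i ^+ (2 * k)).
  rewrite mulr_sumr -sumrN; apply: ler_sum => i _.
  by have := Re_pow_scaled_le (x i) k r0; rewrite ler_norml => /andP[].
have Sy : r^-1 ^+ k * \sum_j Re (y j ^+ (2 * k)) <= \sum_j ratio (y j) ^+ k.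
  rewrite mulr_sumr; apply: ler_sum => j _.
  by have := Re_pow_scaled_le (y j) k r0; rewrite ler_norml => /andP[].
have mu1 : 1 <= mu.
  by rewrite ler1n; apply/card_gt0P; exists i0; rewrite inE /good xi0 eqxx.
move=> /(ler_wpM2l (ltW rk)); rewrite mulrDr mulrCA -Rev => H.
have : mu * Re (((r^-1)%:C * w ^+ 2) ^+ k) <= e k by rewrite /e; lra.
have := e_ge0 k; move: (Re _) (e k) => c ek.
nra.
Qed.

End DominatedPowerSums.

Section NearestPoint.
Variable R : realType.
Implicit Types (a b : R[i]) (s : R).

Lemma resolvent_conjc a s : resolvent a^* s = (resolvent a s)^*.
Proof.
rewrite /resolvent conjc_inv; congr (_^-1).
by rewrite rmorphB /= oppr0.
Qed.

Lemma sqnormc_resolvent_lt a b s : s%:C != a ->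
  sqnormc (s%:C - a) < sqnormc (s%:C - b) -> sqnormc (resolvent b s) < sqnormc (resolvent a s).
Proof.
rewrite -subr_eq0 -sqnormc_gt0 => a0 ab.
by rewrite !sqnormcV ltf_pV2 ?posrE // (lt_trans a0 ab).
Qed.

Lemma near_sqnormc_lt a b : Re a < Re b ->
  \forall s \near +oo, sqnormc (s%:C - b) < sqnormc (s%:C - a).
Proof.
move=> ab; set d := Re b - Re a; have d0 : 0 < d by rewrite subr_gt0.
near=> s; rewrite !sqnormc_subC.
have hs : Im b ^+ 2 < d * (2 * s - Re a - Re b).
  rewrite -ltr_pdivrMl //.
  have : (Im b ^+ 2 / d + Re a + Re b) / 2 < s by near: s; exact: nbhs_pinfty_gt (num_real _).
  lra.
have : (s - Re a) ^+ 2 - (s - Re b) ^+ 2 = d * (2 * s - Re a - Re b) by rewrite /d; ring.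
have := sqr_ge0 (Im a); lra.
Unshelve. all: end_near.
Qed.

Lemma near_nearest k (r : 'I_k -> R[i]) a :
  (forall i, Re (r i) < Re a \/ Re (r i) = Re a /\ Im a ^+ 2 <= Im (r i) ^+ 2) ->
  \forall s \near +oo, forall i,
    [\/ r i = a, r i = a^* | sqnormc (s%:C - a) < sqnormc (s%:C - r i)].
Proof.
move=> ra; apply: filter_forall _ => i; have [lt_ia | [eq_ia le_ia]] := ra i.
  by apply: filterS (near_sqnormc_lt lt_ia) => s; constructor 3.
near=> s; rewrite !sqnormc_subC eq_ia ltrD2l.
have [lt_Im | eq_Im] := ltrP (Im a ^+ 2) (Im (r i) ^+ 2); first by constructor 3.
have /eqP := le_anti (introT andP (conj le_ia eq_Im)); rewrite eqf_sqr => /orP[] /eqP Im_ia.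
  by constructor 1; apply/eqP; rewrite eq_complex eq_ia Im_ia !eqxx.
constructor 2; apply/eqP; rewrite eq_complex; move: eq_ia Im_ia; clear ra le_ia eq_Im.
by case: a => u v /= -> ->; rewrite opprK !eqxx.
Unshelve. all: end_near.
Qed.

End NearestPoint.

Section LCMConsequences.
Variables (R : realType) (m n : nat) (K : R).
Variables (z : 'I_m -> R[i]) (p : 'I_n -> R[i]).
Hypothesis z_real : real_coef_poly (root_poly z).
Hypothesis p_real : real_coef_poly (root_poly p).
Hypothesis lcm : LCM_H K z p.

Lemma near_power_sum_le : \forall s \near +oo, power_sum z 1 s <= power_sum p 1 s.
Proof.
by apply: filterS (near_sigmaH_lt p) => s sp; exact: (LCM_H_power_sum_le z_real p_real lcm sp).
Qed.

Lemma LCM_H_le_degree : (m <= n)%N.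
Proof.
have := ler_cvg_to
  (cvg_sum (P := xpredT) (fun i _ => cvg_mul_Re_resolvent (z i)))
  (cvg_sum (P := xpredT) (fun j _ => cvg_mul_Re_resolvent (p j))).
rewrite /= !sumr_const !card_ord ler_nat; apply.
near=> s; rewrite -!mulr_sumr; apply: ler_wpM2l; last first.
  by near: s; exact: near_power_sum_le.
by apply: ltW; near: s; exact: nbhs_pinfty_gt (num_real 0).
Unshelve. all: end_near.
Qed.

Lemma LCM_H_sum_Re_le : m = n -> \sum_(i < m) Re (z i) <= \sum_(j < n) Re (p j).
Proof.
move=> mn; apply: ler_cvg_to
  (cvg_sum (P := xpredT) (fun i _ => cvg_sqr_mul_Re_resolvent (a := z i)))
  (cvg_sum (P := xpredT) (fun j _ => cvg_sqr_mul_Re_resolvent (a := p j))) _.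
near=> s; rewrite !sumrB -!mulr_sumr !sumr_const !card_ord [in s *+ m]mn lerD2r.
apply: ler_wpM2l; first exact: sqr_ge0.
by near: s; exact: near_power_sum_le.
Unshelve. all: end_near.
Qed.

Lemma Re_root_le_sigmaH i : ((Re (z i))%:E <= sigmaH p)%E.
Proof.
rewrite leNgt; apply/negP => sigma_lt.
have [i1 _ z_le] := @arg_maxP _ _ _ i xpredT (fun i => Re (z i)) isT.
set rho := Re (z i1) in z_le.
have [i2 /eqP Re_i2 Im_le] :=
  @arg_minP _ _ _ i1 (fun i => Re (z i) == rho) (fun i => Im (z i) ^+ 2) (eqxx _).
set a := z i2 in Re_i2 Im_le.
(* For large [s], [a] and its conjugate are the zeros nearest to [s], and all poles
   are farther away. *)
have p_lt j : Re (p j) < Re a.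
  rewrite Re_i2 -lte_fin; apply: le_lt_trans (le_bigmax -oo%E (fun j => (Re (p j))%:E) j) _.
  by apply: lt_le_trans sigma_lt _; rewrite lee_fin; exact: z_le.
have z_near l : Re (z l) < Re a \/ Re (z l) = Re a /\ Im a ^+ 2 <= Im (z l) ^+ 2.
  have /= := z_le l isT; rewrite le_eqVlt Re_i2 => /orP[/eqP eq_ia | lt_ia]; last by left.
  by right; split; last exact/Im_le/eqP.
have [s [[[sigma_s sa] near_p] near_z]] := filter_ex (filterI (filterI (filterI
  (near_sigmaH_lt p) (near_pinfty_neq a))
  (filter_forall _ (fun j => near_sqnormc_lt (p_lt j)))) (near_nearest z_near)).
apply: (@power_sums_not_dominated _ _ _
  (fun i => resolvent (z i) s) (fun j => resolvent (p j) s) (resolvent a s) i2) => //.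
- by rewrite invr_eq0 subr_eq0.
- move=> l; case: (near_z l) => [-> | -> | lt_ia]; [exact: Or31 | | exact/Or33/sqnormc_resolvent_lt].
  exact/Or32/resolvent_conjc.
- by move=> j; exact: sqnormc_resolvent_lt.
- by move=> k k0; exact: (LCM_H_power_sum_le z_real p_real lcm sigma_s k0).
Qed.

End LCMConsequences.

Theorem proposition3 (R : realType) (m n : nat) (K : R)
  (z : 'I_m -> R[i]) (p : 'I_n -> R[i]) :
  K != 0 ->
  real_coef_poly (root_poly z) ->
  real_coef_poly (root_poly p) ->
  (forall (i : 'I_m) (j : 'I_n), z i != p j) ->
  LCM_H K z p ->
  [/\ (m <= n)%N,
      (max_re z <= max_re p)%E &
      (forall e : m = n,
         \sum_(i < m) z i <= \sum_(i < n) p i)].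
Proof.
move=> _ z_real p_real _ lcm; split.
- exact: LCM_H_le_degree z_real p_real lcm.
- apply: bigmax_le => [|i _]; first exact: leNye.
  exact: Re_root_le_sigmaH z_real p_real lcm i.
- move=> mn; rewrite lecE (Im_sum_real z_real) (Im_sum_real p_real) eqxx /= !Re_sum.
  exact: LCM_H_sum_Re_le z_real p_real lcm mn.
Qed.
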